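(* Let $n$ be odd. Then $$M_{Q_{4n}}\!\Big(1+(x^n+1)(x+x^2+\cdots+x^{(n-1)/2})+y\,(x^n+1)(x+x^2+\cdots+x^{(n-1)/2})\Big)=2n-1,$$ and $M_{Q_{4n}}(x^2+1)=16$. In particular $\lambda(Q_{4n})\le\min\{16,2n-1\}$ whenever $n\ge 3$ is odd.
   Context: $Q_{4n}=\langle x,y : x^{2n}=1,\ y^2=x^n,\ xy=yx^{-1}\rangle$. For $f,g\in\mathbb Z[x]$, $M_{Q_{4n}}(f+yg)=\prod_{z^{2n}=1}\big(f(z)f(z^{-1})-z^ng(z)g(z^{-1})\big)$ (the integer group determinant of $Q_{4n}$). $\lambda(G)$ is the smallest absolute value $\ge2$ of an integer group determinant of $G$. *)

From HB Require Import structures.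
From mathcomp Require Import all_boot all_order all_algebra all_field.
Set Implicit Arguments. Unset Strict Implicit. Unset Printing Implicit Defensive.
Import Order.TTheory GRing.Theory Num.Theory.
Local Open Scope ring_scope.

(* A fixed primitive (2n)-th root of unity in algC (for n >= 1; for n = 0 the
   index set below is empty anyway). *)
Definition zeta2n (n : nat) : algC :=
  sval (C_prim_root_exists (ltn0Sn (2 * n).-1)).

Definition evC (p : {poly int}) (z : algC) : algC :=
  (map_poly (fun a : int => a%:~R) p).[z].

(* Integer group determinant of Q_{4n} at f + y g:
   prod_{z^{2n}=1} ( f(z) f(z^-1) - z^n g(z) g(z^-1) ),
   the 2n-th roots of unity being enumerated as zeta2n n ^+ k, k < 2n. *)
Definition MQ (n : nat) (f g : {poly int}) : algC :=
  \prod_(k < 2 * n)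
    (let z := zeta2n n ^+ k in
     evC f z * evC f z^-1 - z ^+ n * evC g z * evC g z^-1).

Definition is_lambdaQ (n : nat) (l : nat) : Prop :=
  [/\ (2 <= l)%N,
      (exists f g : {poly int}, `|MQ n f g| = l%:R) &
      (forall (f g : {poly int}) (k : nat),
          (2 <= k)%N -> `|MQ n f g| = k%:R -> (l <= k)%N)].

Definition hQ (n : nat) : {poly int} :=
  ('X^n + 1) * \sum_(1 <= i < (n.-1)./2 .+1) 'X^i.

From HB Require Import structures.
From mathcomp Require Import all_boot all_order all_algebra all_field.
From mathcomp Require Import zify ring.
From Stdlib Require Import Classical.
Set Implicit Arguments. Unset Strict Implicit. Unset Printing Implicit Defensive.
Import Order.TTheory GRing.Theory Num.Theory.
Local Open Scope ring_scope.

(* Both determinants are products over the 2n-th roots of unity z = zeta^k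
   (zeta = zeta2n n, k < 2n) of the factor T(z) = f(z) f(1/z) - z^n g(z) g(1/z).
   Since n is odd, zeta^n = -1 and w = zeta^2 is a primitive n-th root of unity.
   - For f = 1 + h, g = h with h = (x^n + 1) s, s = x + ... + x^((n-1)/2):
     split the product by parity of k.  At odd k, z^n = -1 kills h, so T = 1.
     At even k = 2i, z = w^i satisfies z^n = 1, and pairing s(z) with s(1/z)
     gives T = 2 (1 + z + ... + z^(n-1)) - 1, which is 2n - 1 for i = 0 and
     -1 otherwise; the n - 1 factors -1 multiply to 1.
   - For f = x^2 + 1, g = 0: T(z) = G(z^2) with G(w) = (w + 1)(1/w + 1), and the
     squares of zeta^k, k < 2n, run twice through the powers w^i, i < n.  For odd
     n the identity prod_(i<n) (x + w^i) = x^n + 1 gives prod (w^i + 1) = 2 and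
     prod w^i = 1, hence each half contributes 4 and the product is 16.
   The bound on lambda(Q_4n) follows by taking the least value >= 2 attained by
   |M|, which exists (classically) since 16 and 2n - 1 are attained. *)

Lemma prod_double_parity (R : comPzSemiRingType) (F : nat -> R) n :
  \prod_(k < (2 * n)%N) F k = \prod_(i < n) F (2 * i)%N * \prod_(i < n) F (2 * i + 1)%N.
Proof.
elim: n => [|n IH]; first by rewrite !big_ord0 mulr1.
have -> : (2 * n.+1 = (2 * n).+2)%N by lia.
rewrite 2!big_ord_recr IH /= [in RHS]big_ord_recr [in RHS]big_ord_recr /= addn1.
by rewrite -!mulrA; congr (_ * _); rewrite mulrCA; congr (_ * _); rewrite mulrC.
Qed.

Lemma prod_double_halves (R : comPzSemiRingType) (F : nat -> R) n :
  \prod_(k < (2 * n)%N) F k = \prod_(i < n) F i * \prod_(i < n) F (n + i)%N.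
Proof.
rewrite -!(big_mkord xpredT) (big_cat_nat (n := n)) //=; last by lia.
rewrite -{2}(add0n n) big_addn.
have -> : (2 * n - n = n)%N by lia.
by rewrite !big_mkord; congr (_ * _); apply: eq_bigr => i _; rewrite addnC.
Qed.

Lemma sum_root_unity_eq0 (R : idomainType) (w : R) n :
  w ^+ n = 1 -> w != 1 -> \sum_(i < n) w ^+ i = 0.
Proof.
move=> wn w1; have : (w - 1) * \sum_(i < n) w ^+ i = 0.
  by rewrite -subrX1 wn subrr.
by move/eqP; rewrite mulf_eq0 subr_eq0 (negbTE w1) => /eqP.
Qed.

(* For odd n and a primitive n-th root w: prod_(i<n) (x + w^i) = x^n + 1,
   obtained by evaluating X^n - 1 = prod (X - w^i) at -x. *)
Lemma prod_add_roots_odd (F : fieldType) n (w x : F) :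
  odd n -> n.-primitive_root w -> \prod_(i < n) (x + w ^+ i) = x ^+ n + 1.
Proof.
move=> n_odd w_prim.
have eval_factor (i : 'I_n) : ('X - (w ^+ i)%:P).[- x] = -1 * (x + w ^+ i).
  by rewrite !hornerE; ring.
move: (factor_Xn_sub_1 w_prim) => /(congr1 (fun p => p.[- x])) /=.
rewrite horner_prod big_mkord (eq_bigr _ (fun i _ => eval_factor i)) big_split /=.
rewrite prodr_const card_ord !hornerE (exprNn x) -signr_odd n_odd expr1 => eq_neg.
by apply: oppr_inj; rewrite -mulN1r eq_neg; ring.
Qed.

Lemma zeta2n_prim n : (0 < n)%N -> (2 * n).-primitive_root (zeta2n n).
Proof.
move=> n_gt0; rewrite /zeta2n; case: (C_prim_root_exists _) => z /=.
by rewrite prednK // muln_gt0.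
Qed.

(* zeta^n is the square root of 1 different from 1. *)
Lemma zeta2n_half n : (0 < n)%N -> zeta2n n ^+ n = -1.
Proof.
move=> n_gt0; have zeta_prim := zeta2n_prim n_gt0.
have sq1 : (zeta2n n ^+ n) ^+ 2 = 1 by rewrite -exprM mulnC prim_expr_order.
have neq1 : zeta2n n ^+ n != 1.
  by rewrite -(expr0 (zeta2n n)) (eq_prim_root_expr zeta_prim) mod0n modn_small //; lia.
by move/eqP: sq1; rewrite sqrf_eq1 (negbTE neq1) => /eqP.
Qed.

Lemma zeta2n_sqr_prim n : (0 < n)%N -> n.-primitive_root (zeta2n n ^+ 2).
Proof.
move=> n_gt0.
by have := dvdn_prim_root (zeta2n_prim n_gt0) (dvdn_mull 2 (dvdnn n)); rewrite mulnK.
Qed.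

Definition mq_factor (n : nat) (f g : {poly int}) (z : algC) : algC :=
  evC f z * evC f z^-1 - z ^+ n * evC g z * evC g z^-1.

Lemma MQ_halves n f g : MQ n f g =
  \prod_(i < n) mq_factor n f g (zeta2n n ^+ i)
  * \prod_(i < n) mq_factor n f g (zeta2n n ^+ (n + i)).
Proof. exact: (prod_double_halves (fun k => mq_factor n f g (zeta2n n ^+ k))). Qed.

Lemma MQ_parity n f g : MQ n f g =
  \prod_(i < n) mq_factor n f g (zeta2n n ^+ (2 * i))
  * \prod_(i < n) mq_factor n f g (zeta2n n ^+ (2 * i + 1)).
Proof. exact: (prod_double_parity (fun k => mq_factor n f g (zeta2n n ^+ k))). Qed.

Lemma evC_X2_add1 (z : algC) : evC ('X^2 + 1) z = z ^+ 2 + 1.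
Proof. by rewrite /evC rmorphD /= map_polyXn rmorph1 !hornerE. Qed.

Lemma evC0 (z : algC) : evC 0 z = 0.
Proof. by rewrite /evC rmorph0 hornerE. Qed.

Lemma evC_hQ n (z : algC) :
  evC (hQ n) z = (z ^+ n + 1) * \sum_(1 <= i < (n.-1)./2.+1) z ^+ i.
Proof.
rewrite /evC /hQ rmorphM rmorphD /= map_polyXn rmorph1 rmorph_sum /= hornerM.
rewrite horner_sum !hornerE; congr (_ * _).
by apply: eq_bigr => i _; rewrite map_polyXn hornerXn.
Qed.

Lemma evC_add1 (p : {poly int}) (z : algC) : evC (1 + p) z = 1 + evC p z.
Proof. by rewrite /evC rmorphD rmorph1 /= hornerD hornerC. Qed.

Lemma prod_roots_conj_odd (F : fieldType) n (w : F) :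
  odd n -> n.-primitive_root w ->
  \prod_(i < n) ((w ^+ i + 1) * ((w ^+ i)^-1 + 1)) = 4%:R.
Proof.
move=> n_odd w_prim.
have n_gt0 : (0 < n)%N by case: n n_odd w_prim.
have prod_add1 : \prod_(i < n) (w ^+ i + 1) = 2%:R.
  under eq_bigr do rewrite addrC.
  by rewrite prod_add_roots_odd // expr1n.
have prod_pow : \prod_(i < n) w ^+ i = 1.
  transitivity (\prod_(i < n) (0 + w ^+ i)); first by under [RHS]eq_bigr do rewrite add0r.
  by rewrite prod_add_roots_odd // expr0n gtn_eqF // add0r.
have factorE (i : 'I_n) : (w ^+ i + 1) * ((w ^+ i)^-1 + 1)
    = (w ^+ i + 1) * (w ^+ i + 1) * (w ^+ i)^-1.
  have wi_neq0 : w ^+ i != 0 by rewrite expf_neq0 // (prim_root_eq0 w_prim) -lt0n.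
  by field.
rewrite (eq_bigr _ (fun i _ => factorE i)) !big_split /= prodfV prod_add1 prod_pow.
by rewrite invr1 mulr1 -natrM.
Qed.

Lemma MQ_X2_add1 n : odd n -> MQ n ('X^2 + 1) 0 = 16%:R.
Proof.
move=> n_odd; have n_gt0 : (0 < n)%N by case: n n_odd.
set w := zeta2n n ^+ 2.
have factorE k : mq_factor n ('X^2 + 1) 0 (zeta2n n ^+ k)
    = (w ^+ k + 1) * ((w ^+ k)^-1 + 1).
  by rewrite /mq_factor !evC_X2_add1 !evC0 !mulr0 subr0 exprVn -!exprM mulnC.
have w_period k : w ^+ (n + k) = w ^+ k.
  by rewrite exprD -exprM mulnC exprM zeta2n_half // sqrrN expr1n mul1r.
rewrite MQ_halves.
under eq_bigr do rewrite factorE.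
under [X in _ * X]eq_bigr do rewrite factorE w_period.
by rewrite prod_roots_conj_odd ?zeta2n_sqr_prim // -natrM.
Qed.

Lemma sum_half_powers_inv (F : fieldType) m (z : F) : z ^+ m.*2.+1 = 1 ->
  \sum_(1 <= i < m.+1) z ^+ i + \sum_(1 <= i < m.+1) z^-1 ^+ i
  = \sum_(i < m.*2.+1) z ^+ i - 1.
Proof.
move=> z_root.
have z_neq0 : z != 0.
  by apply: contra_eq_neq z_root => ->; rewrite expr0n eq_sym oner_eq0.
have inv_pow i : (i <= m.*2.+1)%N -> z^-1 ^+ i = z ^+ (m.*2.+1 - i).
  move=> le_i; rewrite exprVn; apply: (@mulIf _ (z ^+ i)); first exact: expf_neq0.
  by rewrite mulVf ?expf_neq0 // -exprD subnK.
have upper_half : \sum_(1 <= i < m.+1) z^-1 ^+ i = \sum_(m.+1 <= i < m.*2.+1) z ^+ i.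
  rewrite (eq_big_nat _ _ (F2 := fun i => z ^+ (m.*2.+1 - i))); last first.
    by move=> i /andP [? ?]; apply: inv_pow; lia.
  rewrite big_nat_rev [RHS](big_addn 1 _ m) (_ : m.*2.+1 - m = m.+1)%N; last by lia.
  by apply: eq_big_nat => i /andP [? ?]; congr (_ ^+ _); lia.
rewrite upper_half -big_cat_nat; [|lia|lia].
rewrite -(big_mkord xpredT (fun i => z ^+ i)) (big_ltn (ltn0Sn _)) expr0.
by rewrite [1 + _]addrC addrK.
Qed.

(* At a root with z^n = -1 the polynomial h vanishes, so the factor is 1. *)
Lemma mq_factor_hQ_neg n (z : algC) :
  z ^+ n = -1 -> mq_factor n (1 + hQ n) (hQ n) z = 1.
Proof.
move=> z_neg; rewrite /mq_factor !evC_add1 !evC_hQ exprVn z_neg invrN1 addNr.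
by rewrite !mul0r !addr0 mulr1 !mulr0 subr0.
Qed.

Lemma mq_factor_hQ_pos m (z : algC) : z ^+ m.*2.+1 = 1 ->
  mq_factor m.*2.+1 (1 + hQ m.*2.+1) (hQ m.*2.+1) z
  = 2 * \sum_(i < m.*2.+1) z ^+ i - 1.
Proof.
move=> z_root; rewrite /mq_factor !evC_add1 !evC_hQ exprVn z_root invr1 /= doubleK.
set a := \sum_(1 <= i < m.+1) z ^+ i; set b := \sum_(1 <= i < m.+1) z^-1 ^+ i.
transitivity (1 + 2 * (a + b)); first by ring.
by rewrite sum_half_powers_inv //; ring.
Qed.

Lemma MQ_hQ n : odd n -> MQ n (1 + hQ n) (hQ n) = (2 * n - 1)%:R.
Proof.
move=> n_odd; have [m ->] : exists m, n = m.*2.+1.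
  by exists n./2; rewrite -{1}(odd_double_half n) n_odd add1n.
set N := m.*2.+1; have N_gt0 : (0 < N)%N by [].
have zeta_half := zeta2n_half N_gt0; have w_prim := zeta2n_sqr_prim N_gt0.
set w := zeta2n N ^+ 2 in w_prim *.
rewrite MQ_parity.
have odd_factors : \prod_(i < N) mq_factor N (1 + hQ N) (hQ N) (zeta2n N ^+ (2 * i + 1)) = 1.
  apply: big1 => i _; apply: mq_factor_hQ_neg.
  by rewrite -exprM mulnC exprM zeta_half -signr_odd oddD oddM /= expr1.
have wi_root (i : nat) : (w ^+ i) ^+ N = 1 by rewrite exprAC (prim_expr_order w_prim) expr1n.
under eq_bigr => i _ do rewrite exprM -/w (mq_factor_hQ_pos (wi_root i)).
rewrite odd_factors mulr1 big_ord_recl /=.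
have nontrivial_factors : \prod_(i < m.*2) (2 * \sum_(j < N) (w ^+ bump 0 i) ^+ j - 1)
    = \prod_(i < m.*2) (-1 : algC).
  apply: eq_bigr => i _; rewrite sum_root_unity_eq0 ?mulr0 ?sub0r //.
  rewrite -[X in _ != X](expr0 w) (eq_prim_root_expr w_prim) mod0n modn_small //.
  by rewrite /bump /=; have := ltn_ord i; rewrite /N; lia.
rewrite nontrivial_factors prodr_const card_ord -signr_odd odd_double expr0 mulr1.
under eq_bigr do rewrite expr1n; rewrite sumr_const card_ord.
by rewrite natrB ?natrM //; lia.
Qed.

Lemma least_nat_witness (P : nat -> Prop) N :
  P N -> exists l, P l /\ forall k, P k -> (l <= k)%N.
Proof.
elim/ltn_ind: N => N IH PN.
case: (classic (exists2 k, P k & (k < N)%N)) => [[k Pk lt_kN] | no_smaller].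
  exact: IH lt_kN Pk.
exists N; split => // k Pk; rewrite leqNgt; apply/negP => lt_kN.
by apply: no_smaller; exists k.
Qed.

Theorem mainTheorem8 (n : nat) (n_odd : odd n) :
  [/\ MQ n (1 + hQ n) (hQ n) = (2 * n - 1)%:R,
      MQ n ('X^2 + 1) 0 = 16%:R &
      ((3 <= n)%N -> exists l : nat, is_lambdaQ n l /\ (l <= minn 16 (2 * n - 1))%N)].
Proof.
have M_hQ := MQ_hQ n_odd; have M_X2 := MQ_X2_add1 n_odd.
split => // n_ge3.
pose attained k := (2 <= k)%N /\ exists f g : {poly int}, `|MQ n f g| = k%:R.
have att16 : attained 16%N by split => //; exists ('X^2 + 1), 0; rewrite M_X2 normr_nat.
have att2n1 : attained (2 * n - 1)%N.
  by split; [lia | exists (1 + hQ n), (hQ n); rewrite M_hQ normr_nat].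
have [l [[l_ge2 [f [g Ml]]] l_min]] := least_nat_witness att16.
exists l; split; last by rewrite leq_min (l_min _ att16) (l_min _ att2n1).
split => //; first by exists f, g.
by move=> f' g' k k_ge2 Mk; apply: l_min; split => //; exists f', g'.
Qed.
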